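(* Let $f:G\to H$ be a surjective group homomorphism with kernel $K$, and let $L\subset K$ be a subset whose normal closure in $G$ is $K$. Then $\ker\big(f^\#:\kappa G^\#\to\kappa H^\#\big)=L^\#$.
   Context: Let $\kappa$ be a field of characteristic $0$. For a group $G$, let $*:\kappa G\to\kappa G$ be the $\kappa$-linear map with $g^*=g^{-1}$ for $g\in G$, and $(\kappa G)^*$ its fixed points. $A_G$ is the quotient of $\kappa G$ by the two-sided ideal generated by all $ab-ba$ with $a\in\kappa G$, $b\in(\kappa G)^*$; $*$ descends to $A_G$, and $\kappa G^\#=\{x\in A_G:x^*=x\}$ (a commutative subring of the centre of $A_G$). Group elements are identified with their images in $A_G$, and $\bar x=\tfrac12(x+x^* )$ for $x\in A_G$. A group homomorphism $f:G\to H$ induces a ring homomorphism $A_G\to A_H$ commuting with $*$; $f^\#$ is its restriction to $\kappa G^\#\to\kappa H^\#$. For a subset $L\subset G$, $L^\#$ is the ideal of $\kappa G^\#$ generated by $\{\overline{xl}-\bar x : x\in A_G,\ l\in L\}$ (equivalently, by $\{\overline{bl}-\bar b: b\in B, l\in L\}$ for any generating set $B$ of $A_G$ as a $\kappa G^\#$-module). *)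

(* Groups are arbitrary (possibly infinite) groups:
   mathcomp's [groupType] (boot/monoid.v), which carries a choice/eq structure. *)
From HB Require Import structures.
From mathcomp Require Import all_boot all_order all_algebra.
Set Implicit Arguments. Unset Strict Implicit. Unset Printing Implicit Defensive.
Import GRing.Theory.
Local Open Scope ring_scope.

Section GroupAlgebra.
Variables (K : fieldType) (G : groupType).

(* An element of the group algebra K G is represented by a formal finite sum
   sum_i c_i g_i, i.e. a list of pairs (g_i, c_i).  Two representatives denote
   the same element of K G iff they have the same coefficient function. *)
Definition kG := seq (G * K).

Definition coef (x : kG) (g : G) : K := \sum_(p <- x | p.1 == g) p.2.

Definition kGeq (x y : kG) : Prop := forall g, coef x g = coef y g.

Definition kGadd (x y : kG) : kG := x ++ y.
Definition kGscale (c : K) (x : kG) : kG := [seq (p.1, c * p.2) | p <- x].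
Definition kGsub (x y : kG) : kG := kGadd x (kGscale (-1) y).
Definition kGmul (x y : kG) : kG :=
  [seq ((p.1 * q.1)%g, p.2 * q.2) | p <- x, q <- y].
Definition kGstar (x : kG) : kG := [seq ((p.1)^-1%g, p.2) | p <- x].
Definition kGof (g : G) : kG := [:: (g, 1)].

Definition selfadj (b : kG) : Prop := kGeq (kGstar b) b.

Definition kGcomm (a b : kG) : kG := kGsub (kGmul a b) (kGmul b a).

(* x lies in the two-sided ideal of K G generated by all a b - b a,
   a in K G, b in (K G)^*:  x = sum_i u_i (a_i b_i - b_i a_i) v_i. *)
Definition inI (x : kG) : Prop :=
  exists t : seq (kG * kG * kG * kG),
    (forall q, q \in t -> selfadj q.1.2) /\
    kGeq x (flatten [seq kGmul (kGmul q.1.1.1 (kGcomm q.1.1.2 q.1.2)) q.2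
                    | q <- t]).

Definition AGeq (x y : kG) : Prop := inI (kGsub x y).

(* (the class of) x lies in K G^# = { x in A_G | x^* = x } *)
Definition sharp (x : kG) : Prop := AGeq (kGstar x) x.

Definition kGbar (x : kG) : kG := kGscale (2%:R^-1) (kGadd x (kGstar x)).

(* the class of x lies in L^#, the ideal of the ring K G^# generated by
   { bar(x l) - bar(x) : x in A_G, l in L } :
   x = sum_i r_i (bar(y_i l_i) - bar(y_i)) in A_G with r_i in K G^#. *)
Definition inLsharp (L : G -> Prop) (x : kG) : Prop :=
  exists t : seq (kG * kG * G),
    (forall q, q \in t -> sharp q.1.1 /\ L q.2) /\
    AGeq x (flatten [seq kGmul q.1.1
                        (kGsub (kGbar (kGmul q.1.2 (kGof q.2))) (kGbar q.1.2))
                    | q <- t]).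

Definition normal_closure (L : G -> Prop) (g : G) : Prop :=
  forall N : G -> Prop,
    N 1%g ->
    (forall x y, N x -> N y -> N (x * y^-1)%g) ->
    (forall x y, N x -> N (x ^ y)%g) ->
    (forall l, L l -> N l) -> N g.

End GroupAlgebra.

Definition kGmap (K : fieldType) (G H : groupType) (f : G -> H) (x : kG K G)
  : kG K H := [seq (f p.1, p.2) | p <- x].

From HB Require Import structures.
From mathcomp Require Import all_boot all_order all_algebra.
From mathcomp Require Import ring.
From Stdlib Require Import Setoid Morphisms.
Set Implicit Arguments. Unset Strict Implicit. Unset Printing Implicit Defensive.
Import GRing.Theory.
Local Open Scope ring_scope.

(* Identities between them are checked through the pairing
   ev F x = Σ c_i F(g_i) with arbitrary functions F : G → κ, which separates
   the elements of κG (kGeqP); in particular equality in κG is a congruence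
   for all operations, so setoid rewriting is available.

   1. The ideal I defining A_G is a *-stable two-sided ideal containing
      bar(a b) - bar(b a) for all a, b (inI_bar_cyclic).
   2. J_L = { z | bar(y z) ∈ L^# for all y } is a two-sided ideal of κG
      containing I and every l - 1 with l ∈ L.  Hence the g with g - 1 ∈ J_L
      form a normal subgroup containing L, thus the normal closure of L
      (normal_closure_Jtrivial); and a sharp element of J_L lies in L^#
      (sharp_inJ_inLsharp).
   3. For a section s of f, z - s(f z) is a combination of the elements
      (g s(f g)⁻¹ - 1) s(f g), so f z = 0 forces z ∈ J_L (inJ_map0); and
      I_H is the image of I_G (inI_lift).
   4. Main theorem.  (⇐) f kills the generators of L^# (inLsharp_map).
      (⇒) If f x ∈ I_H, pick x' ∈ I_G with f x' = f x; then x - x' ∈ J_L,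
      so x ∈ J_L, and x ∈ L^# since x is sharp. *)

Section Pairing.
Variables (K : fieldType) (G : groupType).
Local Notation kG := (kG K G).
Implicit Types (x y z : kG) (F : G -> K).

Definition ev F x : K := \sum_(p <- x) p.2 * F p.1.

Lemma ev_nil F : ev F [::] = 0.
Proof. by rewrite /ev big_nil. Qed.

Lemma ev_cons F p x : ev F (p :: x) = p.2 * F p.1 + ev F x.
Proof. by rewrite /ev big_cons. Qed.

Lemma ev_cat F x y : ev F (x ++ y) = ev F x + ev F y.
Proof. by rewrite /ev big_cat. Qed.

Lemma ev_scale F c x : ev F (kGscale c x) = c * ev F x.
Proof.
by rewrite /ev big_map mulr_sumr; apply: eq_bigr => p _; rewrite mulrA.
Qed.

Lemma ev_star F x : ev F (kGstar x) = ev (fun g => F g^-1%g) x.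
Proof. by rewrite /ev big_map. Qed.

Lemma ev_mul F x y :
  ev F (kGmul x y) = ev (fun g => ev (fun h => F (g * h)%g) y) x.
Proof.
rewrite /ev big_allpairs_dep; apply: eq_bigr => p _.
by rewrite mulr_sumr; apply: eq_bigr => q _; rewrite mulrA.
Qed.

Lemma ev_of F g : ev F (kGof K g) = F g.
Proof. by rewrite /ev big_seq1 mul1r. Qed.

Lemma ev_sub F x y : ev F (kGsub x y) = ev F x - ev F y.
Proof. by rewrite ev_cat ev_scale mulN1r. Qed.

Lemma ev_comm F x y : ev F (kGcomm x y) = ev F (kGmul x y) - ev F (kGmul y x).
Proof. exact: ev_sub. Qed.

Lemma ev_bar F x : ev F (kGbar x) = 2%:R^-1 * (ev F x + ev F (kGstar x)).
Proof. by rewrite ev_scale ev_cat. Qed.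

Lemma eq_ev F F' x : F =1 F' -> ev F x = ev F' x.
Proof. by move=> eF; apply: eq_bigr => p _; rewrite eF. Qed.

Lemma ev_addF F F' x : ev (fun g => F g + F' g) x = ev F x + ev F' x.
Proof. by rewrite /ev -big_split; apply: eq_bigr => p _; rewrite mulrDr. Qed.

Lemma ev_scaleF c F x : ev (fun g => c * F g) x = c * ev F x.
Proof. by rewrite /ev mulr_sumr; apply: eq_bigr => p _; rewrite mulrCA. Qed.

Lemma ev0F x : ev (fun _ => 0) x = 0.
Proof. by rewrite /ev big1 // => p _; rewrite mulr0. Qed.

Lemma ev_exchange x y (Phi : G -> G -> K) :
  ev (fun g => ev (Phi g) y) x = ev (fun h => ev (Phi^~ h) x) y.
Proof.
rewrite /ev; under eq_bigr do rewrite mulr_sumr.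
rewrite exchange_big; apply: eq_bigr => q _; rewrite mulr_sumr.
by apply: eq_bigr => p _; rewrite mulrCA.
Qed.

Lemma coef_ev x g : coef x g = ev (fun h => (h == g)%:R) x.
Proof.
rewrite /coef /ev big_mkcond; apply: eq_bigr => p _.
by case: eqP => _; rewrite ?mulr1 ?mulr0.
Qed.

Lemma ev_coef F x (S : seq G) : uniq S -> {subset unzip1 x <= S} ->
  ev F x = \sum_(h <- S) coef x h * F h.
Proof.
move=> uS; elim: x => [|p x IH] xS.
  by rewrite ev_nil big1 // => h _; rewrite /coef big_nil mul0r.
have p1S : p.1 \in S by apply: xS; rewrite inE eqxx.
rewrite ev_cons IH; last by move=> h hx; apply: xS; rewrite inE hx orbT.
have -> : \sum_(h <- S) coef (p :: x) h * F h =
    \sum_(h <- S) (if p.1 == h then p.2 else 0) * F h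
  + \sum_(h <- S) coef x h * F h.
  rewrite -big_split; apply: eq_bigr => h _; rewrite /coef big_cons /=.
  by case: eqP => _; rewrite ?mulrDl ?mul0r ?add0r.
congr (_ + _); rewrite (bigD1_seq p.1) //= eqxx big1 ?addr0 // => h.
by rewrite eq_sym => /negbTE ->; rewrite mul0r.
Qed.

Lemma kGeqP x y : kGeq x y <-> forall F, ev F x = ev F y.
Proof.
split=> [exy F|exy g]; last by rewrite !coef_ev.
set S := undup (unzip1 x ++ unzip1 y).
have uS : uniq S by exact: undup_uniq.
rewrite (@ev_coef F x S uS) ?(@ev_coef F y S uS).
- by apply: eq_bigr => h _; rewrite exy.
- by move=> h hy; rewrite mem_undup mem_cat hy orbT.
- by move=> h hx; rewrite mem_undup mem_cat hx.
Qed.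

Lemma ev_mul_ofr F x g : ev F (kGmul x (kGof K g)) = ev (fun h => F (h * g)%g) x.
Proof. by rewrite ev_mul; apply: eq_ev => h; rewrite ev_of. Qed.

Lemma ev_mul_ofl F x g : ev F (kGmul (kGof K g) x) = ev (fun h => F (g * h)%g) x.
Proof. by rewrite ev_mul ev_of. Qed.

End Pairing.

Section Congruence.
Variables (K : fieldType) (G : groupType).

#[export] Instance kGeq_Equivalence : Equivalence (@kGeq K G).
Proof. by split=> [x g|x y e g|x y z e1 e2 g]; rewrite ?e ?e1 ?e2. Qed.

#[export] Instance kGmul_Proper : Proper (@kGeq K G ==> @kGeq K G ==> @kGeq K G) (@kGmul K G).
Proof.
move=> x x' /kGeqP ex y y' /kGeqP ey; apply/kGeqP => F.
by rewrite !ev_mul ex; apply: eq_ev => g; exact: ey.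
Qed.

#[export] Instance cat_Proper : Proper (@kGeq K G ==> @kGeq K G ==> @kGeq K G) (@cat (G * K)).
Proof. by move=> x x' /kGeqP ex y y' /kGeqP ey; apply/kGeqP => F; rewrite !ev_cat ex ey. Qed.

#[export] Instance kGscale_Proper c : Proper (@kGeq K G ==> @kGeq K G) (@kGscale K G c).
Proof. by move=> x x' /kGeqP ex; apply/kGeqP => F; rewrite !ev_scale ex. Qed.

#[export] Instance kGstar_Proper : Proper (@kGeq K G ==> @kGeq K G) (@kGstar K G).
Proof. by move=> x x' /kGeqP ex; apply/kGeqP => F; rewrite !ev_star ex. Qed.

#[export] Instance kGsub_Proper : Proper (@kGeq K G ==> @kGeq K G ==> @kGeq K G) (@kGsub K G).
Proof. by move=> x x' ex y y' ey; rewrite /kGsub ex ey. Qed.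

#[export] Instance kGcomm_Proper : Proper (@kGeq K G ==> @kGeq K G ==> @kGeq K G) (@kGcomm K G).
Proof. by move=> x x' ex y y' ey; rewrite /kGcomm ex ey. Qed.

#[export] Instance kGbar_Proper : Proper (@kGeq K G ==> @kGeq K G) (@kGbar K G).
Proof. by move=> x x' ex; rewrite /kGbar ex. Qed.

End Congruence.

Section Identities.
Variables (K : fieldType) (G : groupType).
Local Notation kG := (kG K G).
Local Notation "[ g ]" := (kGof K g).
Implicit Types (x y z w : kG).

Lemma kGmulA x y z : kGeq (kGmul (kGmul x y) z) (kGmul x (kGmul y z)).
Proof.
apply/kGeqP => F; rewrite !ev_mul; apply: eq_ev => g.
by rewrite ev_mul; apply: eq_ev => h; apply: eq_ev => k; rewrite mulgA.
Qed.

Lemma kGmul1l x : kGeq (kGmul [1%g] x) x.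
Proof. by apply/kGeqP => F; rewrite ev_mul_ofl; apply: eq_ev => g; rewrite mul1g. Qed.

Lemma kGmul1r x : kGeq (kGmul x [1%g]) x.
Proof. by apply/kGeqP => F; rewrite ev_mul_ofr; apply: eq_ev => g; rewrite mulg1. Qed.

Lemma kGmul0r x : kGeq (kGmul x [::]) [::].
Proof.
apply/kGeqP => F; rewrite ev_mul ev_nil -(ev0F x).
by apply: eq_ev => g; rewrite ev_nil.
Qed.

Lemma mul_catl x y z : kGmul (x ++ y) z = kGmul x z ++ kGmul y z.
Proof. exact: allpairs_cat. Qed.

Lemma mul_catr x y z : kGeq (kGmul x (y ++ z)) (kGmul x y ++ kGmul x z).
Proof.
apply/kGeqP => F; rewrite ev_cat !ev_mul -ev_addF.
by apply: eq_ev => g; rewrite ev_cat.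
Qed.

Lemma mul_scalel c x y : kGeq (kGmul (kGscale c x) y) (kGscale c (kGmul x y)).
Proof. by apply/kGeqP => F; rewrite ev_scale !ev_mul ev_scale. Qed.

Lemma mul_scaler c x y : kGeq (kGmul x (kGscale c y)) (kGscale c (kGmul x y)).
Proof.
apply/kGeqP => F; rewrite ev_scale !ev_mul -ev_scaleF.
by apply: eq_ev => g; rewrite ev_scale.
Qed.

Lemma mul_subr x y z : kGeq (kGmul x (kGsub y z)) (kGsub (kGmul x y) (kGmul x z)).
Proof. by rewrite /kGsub mul_catr mul_scaler. Qed.

Lemma mul_flattenr w (s : seq kG) :
  kGeq (kGmul w (flatten s)) (flatten [seq kGmul w z | z <- s]).
Proof. by elim: s => [|z s IH] /=; rewrite ?kGmul0r // mul_catr IH. Qed.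

Lemma star_mul x y : kGeq (kGstar (kGmul x y)) (kGmul (kGstar y) (kGstar x)).
Proof.
apply/kGeqP => F; rewrite ev_star !ev_mul ev_star ev_exchange.
by apply: eq_ev => g; rewrite ev_star; apply: eq_ev => h; rewrite invgM.
Qed.

Lemma starK x : kGeq (kGstar (kGstar x)) x.
Proof. by apply/kGeqP => F; rewrite !ev_star; apply: eq_ev => g; rewrite invgK. Qed.

Lemma star_cat x y : kGstar (x ++ y) = kGstar x ++ kGstar y.
Proof. exact: map_cat. Qed.

Lemma star_scale c x : kGeq (kGstar (kGscale c x)) (kGscale c (kGstar x)).
Proof. by apply/kGeqP => F; rewrite ev_star !ev_scale ev_star. Qed.

Lemma star_flatten (s : seq kG) : kGstar (flatten s) = flatten [seq kGstar z | z <- s].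
Proof. exact: map_flatten. Qed.

Lemma cat_comm x y : kGeq (x ++ y) (y ++ x).
Proof. by apply/kGeqP => F; rewrite !ev_cat addrC. Qed.

Lemma sub_nil x : kGeq (kGsub x [::]) x.
Proof. by apply/kGeqP => F; rewrite ev_sub ev_nil subr0. Qed.

Lemma sub_self x : kGeq (kGsub x x) [::].
Proof. by apply/kGeqP => F; rewrite ev_sub ev_nil subrr. Qed.

Lemma bar_cat x y : kGeq (kGbar (x ++ y)) (kGbar x ++ kGbar y).
Proof. by apply/kGeqP => F; rewrite ev_cat !ev_bar star_cat !ev_cat; ring. Qed.

Lemma bar_sub x y : kGeq (kGbar (kGsub x y)) (kGsub (kGbar x) (kGbar y)).
Proof.
apply/kGeqP => F; rewrite !ev_sub !ev_bar /kGsub star_cat.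
by rewrite !(ev_cat, ev_scale, ev_star); ring.
Qed.

Lemma bar_selfadj x : (2%:R : K) != 0 -> selfadj x -> kGeq (kGbar x) x.
Proof.
move=> two_neq0 /kGeqP sx; apply/kGeqP => F.
by rewrite ev_bar sx; field.
Qed.

Lemma selfadj_bar x : selfadj (kGbar x).
Proof. by rewrite /selfadj /kGbar star_scale star_cat starK cat_comm. Qed.

Lemma flatten_kGeq (I : eqType) (r : seq I) (A B : I -> kG) :
  (forall i, i \in r -> kGeq (A i) (B i)) ->
  kGeq (flatten (map A r)) (flatten (map B r)).
Proof.
elim: r => [|i r IH] eAB //=.
rewrite (eAB i (mem_head _ _)) IH //.
by move=> j jr; apply: eAB; rewrite inE jr orbT.
Qed.

End Identities.

Section CommutatorIdeal.
Variables (K : fieldType) (G : groupType).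
Local Notation kG := (kG K G).
Local Notation "[ g ]" := (kGof K g).
Implicit Types (x y z w : kG).

Definition Igen (q : kG * kG * kG * kG) : kG :=
  kGmul (kGmul q.1.1.1 (kGcomm q.1.1.2 q.1.2)) q.2.

#[export] Instance inI_Proper : Proper (@kGeq K G ==> iff) (@inI K G).
Proof.
move=> x x' ex; split=> -[t [sa e]]; exists t; split=> //.
  by rewrite -ex.
by rewrite ex.
Qed.

#[export] Instance AGeq_Proper : Proper (@kGeq K G ==> @kGeq K G ==> iff) (@AGeq K G).
Proof. by move=> x x' ex y y' ey; rewrite /AGeq ex ey. Qed.

Lemma inI0 z : kGeq z [::] -> inI z.
Proof. by move=> z0; exists [::]. Qed.

Lemma inI_cat z1 z2 : inI z1 -> inI z2 -> inI (z1 ++ z2).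
Proof.
move=> [t1 [sa1 e1]] [t2 [sa2 e2]]; exists (t1 ++ t2); split.
  by move=> q; rewrite mem_cat => /orP[/sa1|/sa2].
by rewrite map_cat flatten_cat e1 e2.
Qed.

Lemma inI_mull w z : inI z -> inI (kGmul w z).
Proof.
move=> [t [sa e]]; exists [seq (kGmul w q.1.1.1, q.1.1.2, q.1.2, q.2) | q <- t].
split; first by move=> q /mapP [q' q't ->]; exact: (sa q' q't).
rewrite e mul_flattenr -!map_comp; apply: flatten_kGeq => q _ /=.
by rewrite /Igen /= !kGmulA.
Qed.

Lemma inI_scale c z : inI z -> inI (kGscale c z).
Proof.
have -> : kGeq (kGscale c z) (kGmul (kGscale c [1%g]) z).
  by rewrite mul_scalel kGmul1l.
exact: inI_mull.
Qed.

Lemma star_comm (a b : kG) : selfadj b ->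
  kGeq (kGstar (kGcomm a b)) (kGscale (-1) (kGcomm (kGstar a) b)).
Proof.
move=> sb; have {}sb : kGeq (kGstar b) b := sb.
rewrite /kGcomm /kGsub star_cat star_scale !star_mul sb.
apply/kGeqP => F; rewrite !(ev_cat, ev_scale); ring.
Qed.

Lemma inI_star z : inI z -> inI (kGstar z).
Proof.
move=> [t [sa e]].
exists [seq (kGscale (-1) (kGstar q.2), kGstar q.1.1.2, q.1.2, kGstar q.1.1.1) | q <- t].
split; first by move=> q /mapP [q' q't ->]; exact: (sa q' q't).
rewrite e star_flatten -!map_comp; apply: flatten_kGeq => q qt /=.
rewrite /Igen /= !star_mul star_comm; last exact: sa.
by rewrite !kGmulA !mul_scalel !mul_scaler.
Qed.

Lemma inI_comm (a b : kG) : selfadj b -> inI (kGcomm a b).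
Proof.
move=> sb; exists [:: ([1%g], a, b, [1%g])]; split.
  by move=> q; rewrite inE => /eqP ->.
by rewrite /= cats0 /Igen /= kGmul1r kGmul1l.
Qed.

(* The trace property of A_G: bar(ab) = bar(ba).  With t z = z + z^*,
   2 (bar(ab) - bar(ba)) = [t b, t a] + [a, t b] - [b, t a]. *)
Lemma inI_bar_cyclic (a b : kG) : inI (kGsub (kGbar (kGmul a b)) (kGbar (kGmul b a))).
Proof.
pose t z := z ++ kGstar z.
have st z : selfadj (t z) by rewrite /selfadj /t star_cat starK cat_comm.
have -> : kGeq (kGsub (kGbar (kGmul a b)) (kGbar (kGmul b a)))
    (kGscale 2%:R^-1 (kGcomm (t b) (t a) ++ kGcomm a (t b)
                      ++ kGscale (-1) (kGcomm b (t a)))).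
  have ev_mulDr F x y z :
      ev F (kGmul x (y ++ z)) = ev F (kGmul x y) + ev F (kGmul x z).
    by rewrite -ev_cat; move: F; apply/kGeqP; rewrite mul_catr.
  have ev_starM F x y : ev F (kGstar (kGmul x y)) = ev F (kGmul (kGstar y) (kGstar x)).
    by move: F; apply/kGeqP; exact: star_mul.
  apply/kGeqP => F; rewrite /t.
  by rewrite ?(ev_sub, ev_cat, ev_scale, ev_bar, ev_comm, mul_catl, ev_mulDr, ev_starM); ring.
apply/inI_scale/inI_cat; first exact: inI_comm.
by apply: inI_cat; [exact: inI_comm | exact/inI_scale/inI_comm].
Qed.

Lemma AGeq_eq x y : kGeq x y -> AGeq x y.
Proof. by move=> exy; apply: inI0; rewrite exy sub_self. Qed.

Lemma AGeq_trans x y z : AGeq x y -> AGeq y z -> AGeq x z.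
Proof.
move=> Ixy Iyz; rewrite /AGeq.
have -> : kGeq (kGsub x z) (kGsub x y ++ kGsub y z).
  by apply/kGeqP => F; rewrite ev_cat !ev_sub; ring.
exact: inI_cat.
Qed.

Lemma AGeq_cat x1 y1 x2 y2 : AGeq x1 y1 -> AGeq x2 y2 -> AGeq (x1 ++ x2) (y1 ++ y2).
Proof.
move=> I1 I2; rewrite /AGeq.
have -> : kGeq (kGsub (x1 ++ x2) (y1 ++ y2)) (kGsub x1 y1 ++ kGsub x2 y2).
  by apply/kGeqP => F; rewrite !(ev_sub, ev_cat); ring.
exact: inI_cat.
Qed.

End CommutatorIdeal.

Section LsharpIdeal.
Variables (K : fieldType) (G : groupType) (L : G -> Prop).
Local Notation kG := (kG K G).
Local Notation "[ g ]" := (kGof K g).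
Implicit Types (x y z w : kG).

Definition Lgen (q : kG * kG * G) : kG :=
  kGmul q.1.1 (kGsub (kGbar (kGmul q.1.2 [q.2])) (kGbar q.1.2)).

Lemma inLsharp_AGeq x y : inLsharp L y -> AGeq x y -> inLsharp L x.
Proof. by move=> [t [gen e]] exy; exists t; split=> //; apply: AGeq_trans exy e. Qed.

Lemma inLsharp_eq x y : inLsharp L y -> kGeq x y -> inLsharp L x.
Proof. by move=> Ly /AGeq_eq; exact: inLsharp_AGeq. Qed.

Lemma inLsharp_cat x y : inLsharp L x -> inLsharp L y -> inLsharp L (x ++ y).
Proof.
move=> [t1 [gen1 e1]] [t2 [gen2 e2]]; exists (t1 ++ t2); split.
  by move=> q; rewrite mem_cat => /orP[/gen1|/gen2].
by rewrite map_cat flatten_cat; apply: AGeq_cat.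
Qed.

Lemma inLsharp_I x : inI x -> inLsharp L x.
Proof. by move=> Ix; exists [::]; split=> //=; rewrite /AGeq sub_nil. Qed.

Lemma inLsharp_gen y l : L l -> inLsharp L (Lgen ([1%g], y, l)).
Proof.
move=> Ll; exists [:: ([1%g], y, l)]; split; last by apply: AGeq_eq; rewrite /= cats0.
move=> q; rewrite inE => /eqP -> /=; split=> //.
by apply: AGeq_eq; rewrite /kGstar /kGof /= invg1.
Qed.

Definition inJ z : Prop := forall y, inLsharp L (kGbar (kGmul y z)).

Lemma inJ_eq z z' : inJ z -> kGeq z z' -> inJ z'.
Proof. by move=> Jz e y; apply: inLsharp_eq (Jz y) _; rewrite e. Qed.

Lemma inJ_cat z1 z2 : inJ z1 -> inJ z2 -> inJ (z1 ++ z2).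
Proof.
move=> J1 J2 y; apply: inLsharp_eq (inLsharp_cat (J1 y) (J2 y)) _.
by rewrite mul_catr bar_cat.
Qed.

Lemma inJ_mull w z : inJ z -> inJ (kGmul w z).
Proof. by move=> Jz y; apply: inLsharp_eq (Jz (kGmul y w)) _; rewrite kGmulA. Qed.

(* Right ideal property, from the trace property bar(y z w) = bar(w y z). *)
Lemma inJ_mulr w z : inJ z -> inJ (kGmul z w).
Proof.
move=> Jz y; apply: inLsharp_AGeq (Jz (kGmul w y)) _.
apply: (AGeq_trans (y := kGbar (kGmul (kGmul y z) w))).
  by apply: AGeq_eq; rewrite kGmulA.
apply: AGeq_trans (inI_bar_cyclic _ _) _.
by apply: AGeq_eq; rewrite kGmulA.
Qed.

Lemma inJ_scale c z : inJ z -> inJ (kGscale c z).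
Proof.
move=> Jz; apply: inJ_eq (inJ_mull (kGscale c [1%g]) Jz) _.
by rewrite mul_scalel kGmul1l.
Qed.

Lemma inJ_sub z1 z2 : inJ z1 -> inJ z2 -> inJ (kGsub z1 z2).
Proof. by move=> J1 J2; apply/inJ_cat/inJ_scale. Qed.

(* I ⊆ J_L, since I is a *-stable two-sided ideal contained in L^#. *)
Lemma inJ_I z : inI z -> inJ z.
Proof.
move=> Iz y; apply/inLsharp_I/inI_scale/inI_cat; first exact: inI_mull.
exact/inI_star/inI_mull.
Qed.

Definition Jtrivial (g : G) : Prop := inJ (kGsub [g] [1%g]).

Lemma Jtrivial1 : Jtrivial 1%g.
Proof.
move=> y; apply/inLsharp_I/inI0; rewrite sub_self kGmul0r.
by apply/kGeqP => F; rewrite ev_bar ev_star !ev_nil addr0 mulr0.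
Qed.

(* g h⁻¹ - 1 = (g - 1) h⁻¹ - (h - 1) h⁻¹ *)
Lemma Jtrivial_mulV g h : Jtrivial g -> Jtrivial h -> Jtrivial (g * h^-1)%g.
Proof.
move=> Jg Jh; apply: (inJ_eq (z := kGsub (kGmul (kGsub [g] [1%g]) [h^-1%g])
                                      (kGmul (kGsub [h] [1%g]) [h^-1%g]))).
  by apply: inJ_sub; apply: inJ_mulr.
apply/kGeqP => F; rewrite !ev_sub !ev_mul_ofr !ev_sub !ev_of mulgV mul1g; ring.
Qed.

(* h⁻¹ g h - 1 = h⁻¹ (g - 1) h *)
Lemma Jtrivial_conj g h : Jtrivial g -> Jtrivial (g ^ h)%g.
Proof.
move=> Jg; apply: (inJ_eq (z := kGmul (kGmul [h^-1%g] (kGsub [g] [1%g])) [h])).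
  exact/inJ_mulr/inJ_mull.
apply/kGeqP => F; rewrite !ev_mul_ofr ev_mul_ofl !ev_sub !ev_of.
by rewrite mulg1 mulVg conjgE mulgA; ring.
Qed.

(* y (l - 1) = y l - y, whose bar is a generator of L^#. *)
Lemma Jtrivial_gen l : L l -> Jtrivial l.
Proof.
move=> Ll y; apply: inLsharp_eq (inLsharp_gen y Ll) _.
by rewrite /Lgen /= kGmul1l mul_subr kGmul1r bar_sub.
Qed.

Lemma normal_closure_Jtrivial g : normal_closure L g -> Jtrivial g.
Proof.
move=> ncg; apply: ncg.
- exact: Jtrivial1.
- exact: Jtrivial_mulV.
- exact: Jtrivial_conj.
- exact: Jtrivial_gen.
Qed.

(* An element of J_L which is sharp lies in L^#: x = bar(1 x) in A_G. *)
Lemma sharp_inJ_inLsharp x : (2%:R : K) != 0 -> sharp x -> inJ x -> inLsharp L x.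
Proof.
move=> two_neq0 sx Jx; apply: inLsharp_AGeq (Jx [1%g]) _; rewrite kGmul1l /AGeq.
have -> : kGeq (kGsub x (kGbar x)) (kGscale (- 2%:R^-1) (kGsub (kGstar x) x)).
  by apply/kGeqP => F; rewrite ev_scale !ev_sub ev_bar; field.
exact: inI_scale _ sx.
Qed.

End LsharpIdeal.

Section GroupAlgebraMap.
Variables (K : fieldType) (G H : groupType) (f : G -> H).
Hypothesis fM : forall x y : G, f (x * y)%g = (f x * f y)%g.
Local Notation "[ g ]" := (kGof K g).
Implicit Types (x y z : kG K G).

Lemma ev_map (A B : groupType) (phi : A -> B) (F : B -> K) (x : kG K A) :
  ev F (kGmap phi x) = ev (F \o phi) x.
Proof. by rewrite /ev big_map. Qed.

#[export] Instance kGmap_Proper (A B : groupType) (phi : A -> B) :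
  Proper (@kGeq K A ==> @kGeq K B) (kGmap phi).
Proof. by move=> x y /kGeqP exy; apply/kGeqP => F; rewrite !ev_map. Qed.

Lemma hom1 : f 1%g = 1%g.
Proof. by apply: (@mulIg _ (f 1%g)); rewrite -fM !mul1g. Qed.

Lemma homV g : f g^-1%g = (f g)^-1%g.
Proof. by apply: (@mulIg _ (f g)); rewrite -fM !mulVg hom1. Qed.

Lemma kGmap_cat x y : kGmap f (x ++ y) = kGmap f x ++ kGmap f y.
Proof. exact: map_cat. Qed.

Lemma kGmap_scale c x : kGmap f (kGscale c x) = kGscale c (kGmap f x).
Proof. by rewrite /kGmap /kGscale -!map_comp. Qed.

Lemma kGmap_star x : kGmap f (kGstar x) = kGstar (kGmap f x).
Proof. by rewrite /kGmap /kGstar -!map_comp; apply: eq_map => p /=; rewrite homV. Qed.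

Lemma kGmap_mul x y : kGmap f (kGmul x y) = kGmul (kGmap f x) (kGmap f y).
Proof.
rewrite /kGmap /kGmul map_allpairs allpairs_mapl allpairs_mapr.
by apply: eq_allpairs => p q /=; rewrite fM.
Qed.

Lemma kGmap_sub x y : kGmap f (kGsub x y) = kGsub (kGmap f x) (kGmap f y).
Proof. by rewrite /kGsub kGmap_cat kGmap_scale. Qed.

Lemma kGmap_bar x : kGmap f (kGbar x) = kGbar (kGmap f x).
Proof. by rewrite /kGbar kGmap_scale kGmap_cat kGmap_star. Qed.

Lemma kGmap_flatten (r : seq (kG K G)) :
  kGmap f (flatten r) = flatten [seq kGmap f z | z <- r].
Proof. exact: map_flatten. Qed.

Lemma kGmap_Igen (q : kG K G * kG K G * kG K G * kG K G) :
  kGmap f (Igen q) = Igen (kGmap f q.1.1.1, kGmap f q.1.1.2, kGmap f q.1.2, kGmap f q.2).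
Proof. by rewrite /Igen /kGcomm !(kGmap_mul, kGmap_sub). Qed.

Lemma inI_map z : inI z -> inI (kGmap f z).
Proof.
move=> [t [sa e]].
exists [seq (kGmap f q.1.1.1, kGmap f q.1.1.2, kGmap f q.1.2, kGmap f q.2) | q <- t].
split.
  move=> _ /mapP [q qt ->] /=; rewrite /selfadj -kGmap_star.
  by have sq : kGeq (kGstar q.1.2) q.1.2 := sa q qt; rewrite sq.
rewrite e kGmap_flatten -!map_comp; apply: flatten_kGeq => q _ /=.
by rewrite kGmap_Igen.
Qed.

(* The easy inclusion L^# ⊆ ker f^#: f kills every generator of L^#. *)
Lemma inLsharp_map (L : G -> Prop) x :
  (forall l, L l -> f l = 1%g) -> inLsharp L x -> inI (kGmap f x).
Proof.
move=> fL [t [gen e]]; have := inI_map e; rewrite kGmap_sub.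
have -> : kGeq (kGmap f (flatten (map (@Lgen K G) t))) [::].
  rewrite kGmap_flatten -map_comp.
  have -> : kGeq (flatten [seq kGmap f (Lgen q) | q <- t]) (flatten [seq [::] | q <- t]).
    apply: flatten_kGeq => q qt; rewrite /Lgen kGmap_mul kGmap_sub !kGmap_bar kGmap_mul.
    by rewrite /kGmap /= (fL _ (gen q qt).2) kGmul1r sub_self kGmul0r.
  by elim: t {gen e}.
by rewrite sub_nil.
Qed.

Variable s : H -> G.
Hypothesis sK : cancel s f.

Lemma kGmap_lift (z : kG K H) : kGmap f (kGmap s z) = z.
Proof.
rewrite /kGmap -map_comp -[RHS]map_id.
by apply: eq_map => -[h c] /=; rewrite sK.
Qed.

Lemma inI_lift (z : kG K H) : (2%:R : K) != 0 -> inI z ->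
  exists2 z' : kG K G, inI z' & kGeq (kGmap f z') z.
Proof.
move=> two_neq0 [t [sa e]].
exists (flatten [seq Igen (kGmap s q.1.1.1, kGmap s q.1.1.2, kGbar (kGmap s q.1.2),
                          kGmap s q.2) | q <- t]).
  exists [seq (kGmap s q.1.1.1, kGmap s q.1.1.2, kGbar (kGmap s q.1.2), kGmap s q.2)
         | q <- t]; split; last by rewrite -map_comp.
  by move=> _ /mapP [q _ ->]; exact: selfadj_bar.
rewrite e kGmap_flatten -map_comp; apply: flatten_kGeq => q qt /=.
by rewrite kGmap_Igen /= kGmap_bar !kGmap_lift /Igen /= (bar_selfadj two_neq0 (sa q qt)).
Qed.

(* With ker f the normal closure of L, every z with f z = 0 lies in J_L:
   z - s(f z) is a sum of terms c (g s(f g)⁻¹ - 1) s(f g). *)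
Lemma inJ_map0 (L : G -> Prop) (z : kG K G) :
  (forall g, f g = 1%g -> normal_closure L g) ->
  kGeq (kGmap f z) [::] -> inJ L z.
Proof.
move=> kerL fz0.
have Jlift : inJ L (kGsub z (kGmap s (kGmap f z))).
  elim: z {fz0} => [|[g c] z IH].
    by apply: inJ_eq (Jtrivial1 L) _; rewrite !sub_self.
  set g' := s (f g).
  apply: (inJ_eq (z := kGscale c (kGmul (kGsub [(g * g'^-1)%g] [1%g]) [g'])
                         ++ kGsub z (kGmap s (kGmap f z)))).
    have fg : f (g * g'^-1)%g = 1%g by rewrite fM homV sK mulgV.
    exact/(inJ_cat _ IH)/inJ_scale/inJ_mulr/(normal_closure_Jtrivial (kerL _ fg)).
  apply/kGeqP => F; rewrite ev_cat ev_scale ev_mul_ofr !ev_sub !ev_map !ev_cons.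
  by rewrite /= !ev_nil -mulgA mulVg mulg1 mul1g; ring.
by apply: inJ_eq Jlift _; rewrite fz0 sub_nil.
Qed.

End GroupAlgebraMap.

Lemma surj_section (G H : groupType) (f : G -> H) :
  (forall h : H, exists g : G, f g = h) -> {s : H -> G | cancel s f}.
Proof.
move=> fsurj; have fsurjb h : exists g, f g == h by have [g <-] := fsurj h; exists g.
by exists (fun h => xchoose (fsurjb h)) => h; apply/eqP/(xchooseP (fsurjb h)).
Qed.

Theorem mainTheorem3 (K : fieldType) (G H : groupType) (f : G -> H)
    (L : G -> Prop) :
  [pchar K] =i pred0 ->
  (forall x y : G, f (x * y)%g = (f x * f y)%g) ->
  (forall h : H, exists g : G, f g = h) ->
  (forall l, L l -> f l = 1%g) ->
  (forall g : G, normal_closure L g <-> f g = 1%g) ->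
  forall x : kG K G, sharp x ->
    (inI (kGmap f x) <-> inLsharp L x).
Proof.
move=> char0 fM fsurj fL kerL x sx.
have two_neq0 : (2%:R : K) != 0 by have := char0 2%N; rewrite !inE /= => ->.
have [s sK] := surj_section fsurj.
split; last exact: inLsharp_map.
move=> /(inI_lift fM sK two_neq0) [x' Ix' fx'].
have Jdiff : inJ L (kGsub x x').
  by apply: (inJ_map0 fM sK) => [g /kerL //|]; rewrite kGmap_sub fx' sub_self.
apply: sharp_inJ_inLsharp => //; apply: inJ_eq (inJ_cat Jdiff (inJ_I L Ix')) _.
by apply/kGeqP => F; rewrite ev_cat ev_sub subrK.
Qed.
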